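(* Let $n,d,k\in\mathbb{N}$ and let $G\subseteq\mathbb{N}$ be infinite (so $G\approx\omega$). Then there exists $H\subseteq\omega^d\cdot k$ with $H\approx\omega^d\cdot k$ such that every $e\in\binom{H}{n}$ satisfies some coloring rule on $\binom{\omega^d\cdot k}{n}$, and every coefficient of every element of $e$ lies in $G$.
   Context: Ordinals are identified with sets of smaller ordinals; $\approx$ is order-equivalence; $\binom{S}{n}$ is the set of $n$-element subsets. Every $\beta<\omega^d\cdot k$ is uniquely written $\beta=\omega^d b+\omega^{d-1}a_{d-1}+\cdots+\omega a_1+a_0$ with $0\le b<k$, $a_j\in\mathbb{N}$; the numbers $a_0,\dots,a_{d-1}$ are called the coefficients of $\beta$. A coloring rule (CR) on $\binom{\omega^d\cdot k}{n}$ is a pair $(\mathcal{Y},\preceq)$ with $\mathcal{Y}:\{1,\dots,n\}\to\{0,\dots,k-1\}$ and $\preceq$ a total preorder on $I=\{(i,j):1\le i\le n,0\le j<d\}$ (with induced equivalence $\equiv$ and strict part $\prec$) such that: (1) if $d\ge1$, $(i,0)\prec(i',0)$ for $i<i'$; if $d=0$, $\mathcal{Y}(i)<\mathcal{Y}(i')$ for $i<i'$; (2) $(i,j)\equiv(i',j)$ for some $j$ implies $\mathcal{Y}(i)=\mathcal{Y}(i')$; (3) $(i,j)\prec(i,j')$ for $j>j'$; (4) $(i,j)\equiv(i',j')$ implies $j=j'$; (5) for $j>0$, $(i,j)\not\equiv(i',j)$ implies $(i,j-1)\not\equiv(i',j-1)$. An edge $e\in\binom{\omega^d\cdot k}{n}$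 satisfies the CR $(\mathcal{Y},\preceq)$ if its elements can be enumerated as $p_i=\omega^d b_i+\sum_{j<d}\omega^j a_{i,j}$ ($1\le i\le n$) with $b_i=\mathcal{Y}(i)$ for all $i$ and $(i,j)\preceq(i',j')\iff a_{i,j}\le a_{i',j'}$ for all $(i,j),(i',j')\in I$. *)

From mathcomp Require Import all_boot.
Set Implicit Arguments. Unset Strict Implicit. Unset Printing Implicit Defensive.

(* An ordinal beta < omega^d * k is represented by its Cantor normal-form data
   (b, a) with beta = omega^d b + sum_{j<d} omega^j a_j;  b < k. *)
Definition cnf (d : nat) := (nat * {ffun 'I_d -> nat})%type.

Definition in_ord (d k : nat) (x : cnf d) : Prop := x.1 < k.

Definition cnf_lt (d : nat) (x y : cnf d) : Prop :=
  x.1 < y.1 \/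
  (x.1 = y.1 /\ exists j : 'I_d, x.2 j < y.2 j /\
     forall j' : 'I_d, j < j' -> x.2 j' = y.2 j').

Definition order_equiv_full (d k : nat) (H : cnf d -> Prop) : Prop :=
  (forall x, H x -> in_ord k x) /\
  exists f : cnf d -> cnf d,
    (forall x, in_ord k x -> H (f x)) /\
    (forall x y, in_ord k x -> in_ord k y -> cnf_lt x y -> cnf_lt (f x) (f y)) /\
    (forall y, H y -> exists2 x, in_ord k x & f x = y).

(* A coloring rule on [omega^d*k]^n; index set I = {1..n} x {0..d-1} is
   represented by 'I_n x 'I_d (i is shifted by one). The total preorder is [le]. *)
Definition is_CR (n d k : nat) (Y : 'I_n -> nat)
  (le : 'I_n -> 'I_d -> 'I_n -> 'I_d -> Prop) : Prop :=
  let lt i j i' j' := le i j i' j' /\ ~ le i' j' i j in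
  let eqv i j i' j' := le i j i' j' /\ le i' j' i j in
  (forall i, Y i < k) /\
  (forall i j, le i j i j) /\
  (forall i1 j1 i2 j2 i3 j3, le i1 j1 i2 j2 -> le i2 j2 i3 j3 -> le i1 j1 i3 j3) /\
  (forall i j i' j', le i j i' j' \/ le i' j' i j) /\
  (0 < d -> forall (j0 : 'I_d), val j0 = 0 ->
     forall i i' : 'I_n, i < i' -> lt i j0 i' j0) /\
  (d = 0 -> forall i i' : 'I_n, i < i' -> Y i < Y i') /\
  (forall i i' j, eqv i j i' j -> Y i = Y i') /\
  (forall i (j j' : 'I_d), j' < j -> lt i j i j') /\
  (forall i j i' j', eqv i j i' j' -> j = j') /\
  (forall (j jm : 'I_d), val j = (val jm).+1 ->
     forall i i', ~ eqv i j i' j -> ~ eqv i jm i' jm).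

Definition satisfies_CR (n d : nat) (p : 'I_n -> cnf d) (Y : 'I_n -> nat)
  (le : 'I_n -> 'I_d -> 'I_n -> 'I_d -> Prop) : Prop :=
  (forall i, (p i).1 = Y i) /\
  (forall i j i' j', le i j i' j' <-> (p i).2 j <= (p i').2 j').

Definition edge_satisfies_some_CR (n d k : nat) (p : 'I_n -> cnf d) : Prop :=
  exists (Y : 'I_n -> nat) (le : 'I_n -> 'I_d -> 'I_n -> 'I_d -> Prop),
    is_CR k Y le /\
    exists q : 'I_n -> cnf d,
      (forall x, (exists i, p i = x) <-> (exists i, q i = x)) /\
      satisfies_CR q Y le.

From Stdlib Require Import ClassicalEpsilon.
From mathcomp Require Import all_boot zify.

Set Implicit Arguments. Unset Strict Implicit. Unset Printing Implicit Defensive.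

(* Map x = omega^d b + sum_j omega^j a_j to the ordinal with the same b whose
   j-th coefficient is g (c_j x), where g enumerates G increasingly and c_j x
   is an injective code of (b, a_(d-1), ..., a_j) that grows as j decreases.
   This map is order preserving, and on its image a coefficient value
   determines its index, the leading digit b and all coefficients above it.
   That is exactly what makes the comparison pattern of the coefficients of
   any n image points a coloring rule, once the points are listed by
   increasing 0-th coefficient (which determines the whole point). *)

Lemma infinite_incr_seq (G : nat -> Prop) :
  (forall m, exists2 x, m <= x & G x) ->
  exists g : nat -> nat, (forall t, G (g t)) /\ {homo g : s t / s < t}.
Proof.
move=> G_inf.
have [next nextP] : exists next : nat -> nat, forall m, m <= next m /\ G (next m).
  by apply: (choice (fun m x => m <= x /\ G x)) => m; have [x] := G_inf m; exists x.
exists (fun t => next (iter t (fun x => (next x).+1) 0)).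
split=> [t | ]; first exact: (nextP _).2.
apply: homo_ltn => [? ? ?|t]; first exact: ltn_trans.
by rewrite iterS; exact: (nextP _).1.
Qed.

Lemma exists_increasing_reindex n (h : 'I_n -> nat) : injective h ->
  exists sigma : 'I_n -> 'I_n, (forall i, exists i', sigma i' = i) /\
    (forall i i' : 'I_n, i < i' -> h (sigma i) < h (sigma i')).
Proof.
move=> h_inj; pose s := sort (relpre h leq) (enum 'I_n).
have size_s : size s = n by rewrite size_sort size_enum_ord.
have mem_s i : i \in s by rewrite mem_sort mem_enum.
exists (fun i => nth i s i); split=> [i | i i' lt_ii'].
  have index_s : index i s < n by rewrite -[X in _ < X]size_s index_mem.
  by exists (Ordinal index_s); rewrite nth_index.
have sorted_s : sorted (relpre h leq) s by apply: sort_sorted => a b; apply: leq_total.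
have uniq_s : uniq s by rewrite sort_uniq enum_uniq.
rewrite (set_nth_default i' i); last by rewrite size_s.
have le_h : h (nth i' s i) <= h (nth i' s i').
  apply: (sorted_leq_nth _ _ _ sorted_s) => [y x z|x|||] /=; rewrite ?inE ?size_s //.
  - exact: leq_trans.
  - exact: ltnW.
rewrite ltn_neqAle le_h andbT (inj_eq h_inj) nth_uniq ?size_s //.
by rewrite neq_ltn lt_ii'.
Qed.

Definition coef d (x : cnf d) (i : nat) : nat :=
  if insub i is Some j then x.2 j else 0.

Lemma coef_ord d (x : cnf d) (j : 'I_d) : coef x j = x.2 j.
Proof. by rewrite /coef valK. Qed.

Lemma coef_out d (x : cnf d) i : d <= i -> coef x i = 0.
Proof. by move=> le_di; rewrite /coef insubF // ltnNge le_di. Qed.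

Definition coef_codes_tail d (S : cnf d -> Prop) :=
  forall u v, S u -> S v -> forall j j' : 'I_d, u.2 j = v.2 j' ->
    [/\ j = j', u.1 = v.1 & forall j'' : 'I_d, j <= j'' -> u.2 j'' = v.2 j''].

Definition cnf_key d (u : cnf d) : nat := if 0 < d then coef u 0 else u.1.

Section ColoringRule.

Variables (d k : nat) (S : cnf d -> Prop).
Hypothesis S_lt : forall u, S u -> u.1 < k.
Hypothesis S_coef_ltn : forall u, S u -> forall j j' : 'I_d, j' < j -> u.2 j < u.2 j'.
Hypothesis S_tail : coef_codes_tail S.

Lemma cnf_key_inj u v : S u -> S v -> cnf_key u = cnf_key v -> u = v.
Proof.
rewrite /cnf_key; case: (posnP d) => [d0 | d_gt0] Su Sv.
  case: u v Su Sv => [b a] [b' a'] _ _ /= ->; congr pair.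
  by apply/ffunP => j; exfalso; have := ltn_ord j; lia.
rewrite -[0]/(val (Ordinal d_gt0)) !coef_ord => /(S_tail Su Sv) [_ eq_b eq_above].
case: u v eq_b eq_above {Su Sv} => [b a] [b' a'] /= -> eq_above; congr pair.
by apply/ffunP => j; apply: eq_above.
Qed.

Lemma pattern_is_CR n (q : 'I_n -> cnf d) : (forall i, S (q i)) ->
  (forall i i' : 'I_n, i < i' -> cnf_key (q i) < cnf_key (q i')) ->
  is_CR k (fun i => (q i).1) (fun i j i' j' => (q i).2 j <= (q i').2 j').
Proof.
move=> Sq key_incr.
have tail i i' := S_tail (Sq i) (Sq i').
have eqv_eq i j i' j' : (q i).2 j <= (q i').2 j' /\ (q i').2 j' <= (q i).2 j ->
    (q i).2 j = (q i').2 j'.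
  by case=> *; apply/anti_leq/andP.
split; first by move=> i; apply: S_lt.
split; first by [].
split; first by move=> ? ? ? ? ? ?; apply: leq_trans.
split; first by move=> i j i' j'; case/orP: (leq_total ((q i).2 j) ((q i').2 j')); tauto.
split.
  move=> d_gt0 j0 j0_0 i i' /key_incr; rewrite /cnf_key d_gt0.
  by rewrite -[0]j0_0 !coef_ord; lia.
split.
  move=> d0 i i' /key_incr; rewrite /cnf_key.
  by have -> : (0 < d) = false by rewrite d0.
split; first by move=> i i' j /eqv_eq /tail [].
split; first by move=> i j j' /(S_coef_ltn (Sq i)); lia.
split; first by move=> i j i' j' /eqv_eq /tail [].
move=> j jm j_jm i i' not_eqv /eqv_eq /tail [_ _ eq_above]; apply: not_eqv.
by rewrite eq_above // j_jm.
Qed.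

Lemma edge_satisfies_some_CR_in n (p : 'I_n -> cnf d) :
  injective p -> (forall i, S (p i)) -> edge_satisfies_some_CR k p.
Proof.
move=> p_inj Sp.
have key_inj : injective (fun i => cnf_key (p i)).
  by move=> i i' /cnf_key_inj eq_p; apply/p_inj/eq_p.
have [sigma [sigma_onto sigma_incr]] := exists_increasing_reindex key_inj.
exists (fun i => (p (sigma i)).1).
exists (fun i j i' j' => (p (sigma i)).2 j <= (p (sigma i')).2 j').
split; first exact: pattern_is_CR.
exists (fun i => p (sigma i)); split=> [x|]; last by [].
split=> -[i <-]; last by exists (sigma i).
by have [i' <-] := sigma_onto i; exists i'.
Qed.

End ColoringRule.

Definition pair_code (u a : nat) : nat := 2 ^ u.+1 * a.*2.+1.

Lemma logn2_pair_code u a : logn 2 (pair_code u a) = u.+1.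
Proof.
rewrite lognM ?expn_gt0 // pfactorK // logn_coprime ?addn0 //.
by rewrite coprime2n /= odd_double.
Qed.

Lemma pair_code_inj u a v b : pair_code u a = pair_code v b -> u = v /\ a = b.
Proof.
move=> eq_code; have := congr1 (logn 2) eq_code.
rewrite !logn2_pair_code => -[eq_uv]; subst v; split=> //.
move: eq_code => /eqP; rewrite eqn_pmul2l ?expn_gt0 // eqSS => /eqP.
exact: double_inj.
Qed.

Lemma pair_code_gtl u a : u < pair_code u a.
Proof. by apply: leq_trans (ltnW (ltn_expl u.+1 (ltnSn 1))) _; rewrite leq_pmulr. Qed.

Lemma ltn_pair_code2l u a b : (pair_code u a < pair_code u b) = (a < b).
Proof. by rewrite ltn_pmul2l ?expn_gt0 // ltnS ltn_double. Qed.

Lemma odd_pair_code u a : odd (pair_code u a) = false.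
Proof. by rewrite oddM oddX. Qed.

(* Level 0 is odd and pair codes are even, so a code determines its level. *)
Fixpoint prefix_code d (x : cnf d) (m : nat) : nat :=
  if m is m'.+1 then pair_code (prefix_code x m') (coef x (d - m)) else x.1.*2.+1.

Lemma prefix_code_inj d (x y : cnf d) m m' : prefix_code x m = prefix_code y m' ->
  [/\ m = m', x.1 = y.1 & forall t, t <= m -> prefix_code x t = prefix_code y t].
Proof.
elim: m m' => [|m IH] [|m'] /=.
- by move=> [/double_inj eq_b]; split=> // t; rewrite leqn0 => /eqP ->; rewrite /= eq_b.
- by move/(congr1 odd); rewrite odd_pair_code /= odd_double.
- by move/(congr1 odd); rewrite odd_pair_code /= odd_double.
- case/pair_code_inj => /IH [-> eq_b eq_below] eq_coef; split=> // t.
  rewrite leq_eqVlt ltnS => /predU1P [-> /= | /eq_below //].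
  by rewrite eq_below // eq_coef.
Qed.

Lemma prefix_code_ltn d (x : cnf d) : {homo prefix_code x : m t / m < t}.
Proof. by apply: homo_ltn => [? ? ?|m]; [exact: ltn_trans | exact: pair_code_gtl]. Qed.

Lemma prefix_code_eq d (x y : cnf d) m : x.1 = y.1 ->
  (forall i, d - m <= i -> coef x i = coef y i) -> prefix_code x m = prefix_code y m.
Proof.
move=> eq_b; elim: m => [|m IH] eq_coef /=; first by rewrite eq_b.
by rewrite IH ?eq_coef // => i le_i; apply: eq_coef; lia.
Qed.

Section Embedding.

Variables (d : nat) (g : nat -> nat).
Hypothesis g_incr : {homo g : s t / s < t}.

Definition embed (x : cnf d) : cnf d :=
  (x.1, [ffun j : 'I_d => g (prefix_code x (d - j))]).

Lemma embed_coef x j : (embed x).2 j = g (prefix_code x (d - j)).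
Proof. by rewrite ffunE. Qed.

Lemma embed_lt x y : cnf_lt x y -> cnf_lt (embed x) (embed y).
Proof.
case=> [lt_b | [eq_b [j [lt_j eq_above]]]]; [by left | right; split=> //].
have eq_prefix m : m <= d - j.+1 -> prefix_code x m = prefix_code y m.
  move=> le_m; apply: prefix_code_eq => // i le_i.
  have [lt_id | ge_id] := ltnP i d; last by rewrite !coef_out.
  by rewrite -[i]/(val (Ordinal lt_id)) !coef_ord eq_above //=; lia.
have lt_jd := ltn_ord j.
exists j; split=> [|j' lt_j']; rewrite !embed_coef; last by rewrite eq_prefix //; lia.
have -> : d - j = (d - j.+1).+1 by lia.
apply: g_incr; rewrite /= eq_prefix // ltn_pair_code2l.
have -> : d - (d - j.+1).+1 = j by lia.
by rewrite !coef_ord.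
Qed.

Lemma embed_coef_ltn x (j j' : 'I_d) : j' < j -> (embed x).2 j < (embed x).2 j'.
Proof.
move=> lt_j'j; rewrite !embed_coef; apply/g_incr/prefix_code_ltn.
by have := ltn_ord j; lia.
Qed.

Lemma embed_codes_tail (P : cnf d -> Prop) :
  coef_codes_tail (fun u => exists2 x, P x & embed x = u).
Proof.
move=> _ _ [x _ <-] [y _ <-] j j'.
rewrite !embed_coef => /(incn_inj (leq_mono g_incr)) /prefix_code_inj [eq_m eq_b eq_prefix].
split=> // [|j'' le_j]; last by rewrite !embed_coef eq_prefix //; lia.
by apply: ord_inj; have := ltn_ord j; have := ltn_ord j'; lia.
Qed.

End Embedding.

Theorem lemma9p2 (n d k : nat) (G : nat -> Prop)
  (G_infinite : forall m, exists2 x, m <= x & G x) :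
  exists H : cnf d -> Prop,
    order_equiv_full k H /\
    forall p : 'I_n -> cnf d, injective p -> (forall i, H (p i)) ->
      edge_satisfies_some_CR k p /\
      (forall (i : 'I_n) (j : 'I_d), G ((p i).2 j)).
Proof.
have [g [gG g_incr]] := infinite_incr_seq G_infinite.
pose H (u : cnf d) := exists2 x, in_ord k x & embed g x = u.
exists H; split.
  split=> [_ [x x_k <-] // | ]; exists (embed g).
  split=> [x x_k | ]; first by exists x.
  by split=> [x y _ _ | u [x x_k <-]]; [exact: embed_lt | exists x].
move=> p p_inj Hp; split; last by move=> i j; have [x _ <-] := Hp i; rewrite embed_coef.
apply: edge_satisfies_some_CR_in p_inj Hp; last exact: embed_codes_tail.
  by move=> _ [x x_k <-].
by move=> _ [x _ <-] j j'; apply: embed_coef_ltn.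
Qed.
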